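(* Let $n\in\mathbb{N}$ be even and let $(\mathcal{A},\mathcal{B},\mathcal{C})$ be a triple of adversaries for the BB84 monogamy-of-entanglement game with identical basis with parameter $n$ that wins with probability $p_n$. Then there exist a quantum state $\rho_{012}$ and a pair of adversaries for the extended non-local game with parameter $n$ that win with the same probability $p_n$.
   Context: Let $\Theta_n=\{\theta\in\{0,1\}^n: |\theta|=n/2\}$ and $|x^\theta\rangle=\bigotimes_i H^{\theta_i}|x_i\rangle$. For $\theta\in\Theta_n$, $b\in\{0,1\}$ and $x\in\{0,1\}^n$ let $x_{T_b}=(x_i)_{i:\theta_i=b}$. BB84 game with identical basis, parameter $n$: the challenger samples uniform $x\in\{0,1\}^n$, $\theta\in\Theta_n$, sends $|x^\theta\rangle$ to $\mathcal{A}$; $\mathcal{A}$ sends the two parts of a bipartite state $\sigma_{12}$ to $\mathcal{B}$ and $\mathcal{C}$ (who then cannot communicate); the challenger samples a uniform bit $b$ and sends $(\theta,b)$ to both; $\mathcal{B},\mathcal{C}$ output $x_1,x_2$; they win if $x_1=x_2=x_{T_b}$. Extended non-local game, parameter $n$, between a challenger and two players $\mathcal{B}',\mathcal{C}'$: the players jointly prepare a state $\rho_{012}$ where $\rho_0$ is an $n$-qubit register, send register $0$ to the challenger, and keep registers $1$ and $2$ respectively; from then on they cannot communicate. The challenger samples uniform $\theta\in\Theta_n$ and $b\in\{0,1\}$, measures the $i$-th qubit of register $0$ in the computational basis if $\theta_i=0$ and in the Hadamard basis if $\theta_i=1$, obtaining $m\in\{0,1\}^n$, and sends $(\theta,b)$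 to both players. The players output $m_1,m_2$ and win if $m_1=m_2=m_{T_b}$. *)

From HB Require Import structures.
From mathcomp Require Import all_boot all_order all_algebra.
Set Implicit Arguments. Unset Strict Implicit. Unset Printing Implicit Defensive.
Import Order.TTheory GRing.Theory Num.Theory.
Local Open Scope ring_scope.

Section Quantum.
Variable C : numClosedFieldType.

Definition op (T : finType) := T -> T -> C.

Definition trace (T : finType) (A : op T) : C := \sum_(i : T) A i i.

Definition mulop (T : finType) (A B : op T) : op T :=
  fun i j => \sum_(k : T) A i k * B k j.

Definition idop (T : finType) : op T := fun i j => (i == j)%:R.

Definition psd (T : finType) (A : op T) : Prop :=
  forall v : T -> C, 0 <= \sum_(i : T) \sum_(j : T) (v i)^* * A i j * v j.

Definition is_state (T : finType) (rho : op T) : Prop := psd rho /\ trace rho = 1.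

Definition is_povm (T O : finType) (M : O -> op T) : Prop :=
  (forall o, psd (M o)) /\ (forall i j, \sum_(o : O) M o i j = idop i j).

Definition tens (T1 T2 : finType) (A : op T1) (B : op T2) : op (T1 * T2)%type :=
  fun p q => A p.1 q.1 * B p.2 q.2.

(* linear superoperator from op X to op Y, given by its coefficients *)
Definition superop (X Y : finType) := Y -> Y -> X -> X -> C.

Definition apply_sop (X Y : finType) (Phi : superop X Y) (rho : op X) : op Y :=
  fun y y' => \sum_(x : X) \sum_(x' : X) Phi y y' x x' * rho x x'.

Definition id_tens_sop (E X Y : finType) (Phi : superop X Y) (rho : op (E * X)%type)
  : op (E * Y)%type :=
  fun p q => \sum_(x : X) \sum_(x' : X) Phi p.2 q.2 x x' * rho (p.1, x) (q.1, x').

Definition is_channel (X Y : finType) (Phi : superop X Y) : Prop :=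
  (forall (E : finType) (rho : op (E * X)%type), psd rho -> psd (id_tens_sop Phi rho))
  /\ (forall x x', \sum_(y : Y) Phi y y x x' = idop x x').

Definition proj (T : finType) (psi : T -> C) : op T := fun y y' => psi y * (psi y')^*.

(* n-bit strings = computational basis of n qubits *)
Definition bits (n : nat) := {ffun 'I_n -> bool}.

Definition had (a b : bool) : C := (if a && b then -1 else 1) / sqrtC 2.

(* |x^theta> = (x)_i H^{theta_i} |x_i> as a vector in the computational basis *)
Definition ket (n : nat) (theta x : bits n) : bits n -> C :=
  fun y => \prod_(i < n) (if theta i then had (y i) (x i) else (y i == x i)%:R).

Definition Theta (n : nat) : {set bits n} := [set th : bits n | #|[set i | th i]| == n./2].

(* x_{T_b} : the bits x_i with theta_i = b, in increasing order of i *)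
Definition subs (n : nat) (theta : bits n) (b : bool) (x : bits n) : seq bool :=
  map (fun i => x i) [seq i <- enum 'I_n | theta i == b].

Definition guess (n : nat) := (n./2).-tuple bool.

Definition bb84_win (n : nat) (T1 T2 : finType) (Phi : superop (bits n) (T1 * T2)%type)
  (B : bits n -> bool -> guess n -> op T1) (Cm : bits n -> bool -> guess n -> op T2) : C :=
  \sum_(x : bits n) \sum_(th in Theta n) \sum_(b : bool)
    ((2 ^ n)%:R^-1 * (#|Theta n|%:R)^-1 * 2^-1) *
    \sum_(g : guess n) (val g == subs th b x)%:R *
      trace (mulop (tens (B th b g) (Cm th b g)) (apply_sop Phi (proj (ket th x)))).

Definition ext_win (n : nat) (S1 S2 : finType) (rho : op (bits n * (S1 * S2))%type)
  (B : bits n -> bool -> guess n -> op S1) (Cm : bits n -> bool -> guess n -> op S2) : C :=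
  \sum_(th in Theta n) \sum_(b : bool)
    ((#|Theta n|%:R)^-1 * 2^-1) *
    \sum_(m : bits n) \sum_(g : guess n) (val g == subs th b m)%:R *
      trace (mulop (tens (proj (ket th m)) (tens (B th b g) (Cm th b g))) rho).

End Quantum.

From mathcomp Require Import all_boot all_order all_algebra.
From mathcomp Require Import ring.
Set Implicit Arguments. Unset Strict Implicit. Unset Printing Implicit Defensive.
Import GRing.Theory Num.Theory.
Local Open Scope ring_scope.

(* The players of the extended game share the normalised Choi state
   rho = 2^-n (id (x) Phi)(|Phi+><Phi+|), |Phi+> = sum_x |x>|x>, of the
   attacker's channel and reuse the measurements of B and C.  Measuring
   register 0 of rho in the basis |x^theta> gives x with probability 2^-n and
   leaves registers 1 2 in Phi(|conj(x^theta)><conj(x^theta)|); as |x^theta>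
   has real amplitudes, this is exactly the BB84 game. *)

Lemma sumr_mul_delta (R : pzSemiRingType) (T : finType) (a : T) (F : T -> R) :
  \sum_x F x * (a == x)%:R = F a.
Proof.
rewrite (bigD1 a) //= eqxx mulr1 big1 ?addr0 // => x /negbTE.
by rewrite eq_sym => ->; rewrite mulr0.
Qed.

Lemma sum_pair (R : nmodType) (I J : finType) (F : (I * J)%type -> R) :
  \sum_(p : (I * J)%type) F p = \sum_i \sum_j F (i, j).
Proof. by rewrite pair_bigA; apply: eq_bigr => -[]. Qed.

Lemma card_bits (n : nat) : #|bits n| = (2 ^ n)%N.
Proof. by rewrite card_ffun card_ord card_bool. Qed.

Lemma conj_ket (C : numClosedFieldType) (n : nat) (th x y : bits n) :
  (ket C th x y)^* = ket C th x y.
Proof.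
apply: conj_Creal; apply: rpred_prod => i _.
case: (th i); last exact: rpred_nat.
apply: rpredM; first by case: (_ && _); rewrite ?rpredN rpred1.
by rewrite rpredV sqrtC_real ?ler0n.
Qed.

Lemma psd_proj (C : numClosedFieldType) (T : finType) (psi : T -> C) :
  psd (proj psi).
Proof.
move=> v.
have -> : \sum_i \sum_j (v i)^* * proj psi i j * v j =
          (\sum_i (v i)^* * psi i) * (\sum_i (v i)^* * psi i)^*.
  rewrite mulr_suml; apply: eq_bigr => i _.
  rewrite rmorph_sum mulr_sumr; apply: eq_bigr => j _.
  by rewrite /proj rmorphM /= conjCK; ring.
exact: mul_conjC_ge0.
Qed.

Lemma psdZ (C : numClosedFieldType) (T : finType) (c : C) (A : op C T) :
  0 <= c -> psd A -> psd (fun p q => c * A p q).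
Proof.
move=> c_ge0 psdA v.
have -> : \sum_i \sum_j (v i)^* * (c * A i j) * v j =
          c * \sum_i \sum_j (v i)^* * A i j * v j.
  rewrite mulr_sumr; apply: eq_bigr => i _; rewrite mulr_sumr.
  by apply: eq_bigr => j _; ring.
exact: mulr_ge0.
Qed.

Section ChoiState.
Variables (C : numClosedFieldType) (X Y : finType) (Phi : superop C X Y).

Definition maxent : (X * X)%type -> C := fun q => (q.1 == q.2)%:R.

Definition choi_state : op C (X * Y)%type :=
  fun p q => #|X|%:R^-1 * Phi p.2 q.2 p.1 q.1.

Lemma id_tens_sop_maxent p q :
  id_tens_sop Phi (proj maxent) p q = Phi p.2 q.2 p.1 q.1.
Proof.
rewrite /id_tens_sop -[RHS](sumr_mul_delta p.1 (fun x => Phi p.2 q.2 x q.1)).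
apply: eq_bigr => x _.
rewrite -(sumr_mul_delta q.1 (Phi p.2 q.2 x)) mulr_suml.
apply: eq_bigr => x' _.
by rewrite /proj /maxent conjC_nat /=; ring.
Qed.

Lemma is_state_choi : (0 < #|X|)%N -> is_channel Phi -> is_state choi_state.
Proof.
move=> X_gt0 [CP_Phi TP_Phi]; split.
  have inv_card_ge0 : 0 <= #|X|%:R^-1 :> C by rewrite invr_ge0 ler0n.
  have psd_choi := psdZ inv_card_ge0 (CP_Phi _ _ (psd_proj maxent)).
  move=> v; have := psd_choi v.
  by under eq_bigr do under eq_bigr do rewrite id_tens_sop_maxent.
rewrite /trace sum_pair.
under eq_bigr => x _ do rewrite -mulr_sumr TP_Phi /idop eqxx.
rewrite sumr_const mulr1 -[LHS]mulr_natr; apply: mulVf.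
by rewrite pnatr_eq0 -lt0n.
Qed.

(* The conjugate appears by the transpose trick
   (A (x) 1)|Phi+> = (1 (x) A^T)|Phi+>. *)
Lemma trace_tens_proj_choi (k k' : X -> C) (M : op C Y) :
  (forall x, k' x = (k x)^*) ->
  trace (mulop (tens (proj k) M) choi_state) =
  #|X|%:R^-1 * trace (mulop M (apply_sop Phi (proj k'))).
Proof.
move=> k'E.
rewrite /trace /mulop /tens /proj /apply_sop /choi_state sum_pair exchange_big /=.
rewrite mulr_sumr; apply: eq_bigr => s _.
rewrite exchange_big /= sum_pair exchange_big /=.
rewrite mulr_sumr; apply: eq_bigr => s' _.
rewrite mulrA mulr_sumr; apply: eq_bigr => x _.
rewrite mulr_sumr; apply: eq_bigr => x' _.
by rewrite !k'E conjCK; ring.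
Qed.

End ChoiState.

Lemma ext_win_choi_state (C : numClosedFieldType) (n : nat) (T1 T2 : finType)
    (Phi : superop C (bits n) (T1 * T2)%type) (B : bits n -> bool -> guess n -> op C T1)
    (Cm : bits n -> bool -> guess n -> op C T2) :
  ext_win (choi_state Phi) B Cm = bb84_win Phi B Cm.
Proof.
rewrite /ext_win /bb84_win [RHS]exchange_big; apply: eq_bigr => th _.
rewrite [RHS]exchange_big; apply: eq_bigr => b _.
rewrite mulr_sumr; apply: eq_bigr => x _; rewrite !mulr_sumr; apply: eq_bigr => g _.
rewrite (trace_tens_proj_choi _ _ (fun y => esym (conj_ket _ _ _ y))).
by rewrite card_bits; ring.
Qed.

Theorem mainTheorem3 (C : numClosedFieldType) (n : nat) (T1 T2 : finType)
  (Phi : superop C (bits n) (T1 * T2)%type)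
  (B : bits n -> bool -> guess n -> op C T1)
  (Cm : bits n -> bool -> guess n -> op C T2) (p : C) :
  ~~ odd n ->
  is_channel Phi ->
  (forall th b, is_povm (B th b)) ->
  (forall th b, is_povm (Cm th b)) ->
  bb84_win Phi B Cm = p ->
  exists (S1 S2 : finType) (rho : op C (bits n * (S1 * S2))%type)
         (B' : bits n -> bool -> guess n -> op C S1)
         (C' : bits n -> bool -> guess n -> op C S2),
    [/\ is_state rho, (forall th b, is_povm (B' th b)),
        (forall th b, is_povm (C' th b)) & ext_win rho B' C' = p].
Proof.
move=> _ Phi_channel povmB povmC <-.
exists T1, T2, (choi_state Phi), B, Cm; split => //.
- by apply: is_state_choi; rewrite // card_bits expn_gt0.
- exact: ext_win_choi_state.
Qed.
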